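(* In the setting described in the context, there exists $z^*\in\arg\min_{c'\in[K]\setminus\{c^*\}} P_2(c')$ such that $P_1(z^* )=P_2(z^* )$.
   Context: Let $N_p\ge 1$ and $K\ge 2$ be integers, and write $[m]=\{1,\dots,m\}$. Let real numbers $\rho_i^c$ be given for $i\in[N_p]$ and $c\in[K]$. A vote configuration is a matrix $\tilde V=(\tilde v_i^c)\in\{0,1\}^{N_p\times K}$ with $\sum_{c=1}^K \tilde v_i^c=1$ for every $i\in[N_p]$. Its cost is $O(\tilde V)=\sum_{i=1}^{N_p}\sum_{c=1}^K \rho_i^c\,\tilde v_i^c$. Let $\mathrm{majVote}(\tilde V)$ denote the smallest index among the maximizers of $c\mapsto \sum_{i=1}^{N_p}\tilde v_i^c$. Fix a class $c^*\in[K]$. For $c'\in[K]$ define: - $P_1(c')=\min\{O(\tilde V): \tilde V \text{ a vote configuration with } \sum_{i=1}^{N_p}(\tilde v_i^{c'}-\tilde v_i^{c})\ge \mathbf 1_{c<c'}\ \forall c\in[K]\setminus\{c'\}\}$. The constraint is equivalent to $\mathrm{majVote}(\tilde V)=c'$. - $P_2(c')=\min\{O(\tilde V): \tilde V \text{ a vote configuration with } \sum_{i=1}^{N_p}(\tilde v_i^{c'}-\tilde v_i^{c^*})\ge \mathbf 1_{c^*<c'}\}$. Here $\mathbf 1_{a<b}$ equals $1$ if $a<b$ and $0$ otherwise. *)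

From HB Require Import structures.
From mathcomp Require Import all_boot all_order all_algebra.
Set Implicit Arguments. Unset Strict Implicit. Unset Printing Implicit Defensive.
Import Order.TTheory GRing.Theory Num.Theory.
Local Open Scope ring_scope.

(* A candidate vote matrix: entries in {0,1} (booleans, read as 0/1 via nat_of_bool). *)
Definition voteMx (Np K : nat) := 'M[bool]_(Np, K).

Definition is_vote_config (Np K : nat) (V : voteMx Np K) : bool :=
  [forall i : 'I_Np, (\sum_(c < K) (V i c : nat))%N == 1%N].

Definition cost (R : realFieldType) (Np K : nat) (rho : 'I_Np -> 'I_K -> R)
  (V : voteMx Np K) : R :=
  \sum_(i < Np) \sum_(c < K) rho i c * (V i c : nat)%:R.

Definition votes (Np K : nat) (V : voteMx Np K) (c : 'I_K) : int :=
  (\sum_(i < Np) (V i c : nat))%:Z.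

Definition all_vote (Np K : nat) (c' : 'I_K) : voteMx Np K :=
  \matrix_(i, c) (c == c').

Definition feas1 (Np K : nat) (c' : 'I_K) (V : voteMx Np K) : bool :=
  is_vote_config V &&
  [forall c : 'I_K, (c != c') ==> (votes V c' - votes V c >= ((c < c')%N : nat)%:Z)].

Definition feas2 (Np K : nat) (cstar c' : 'I_K) (V : voteMx Np K) : bool :=
  is_vote_config V &&
  (votes V c' - votes V cstar >= ((cstar < c')%N : nat)%:Z).

(* Minimum of the cost over a finite feasible set; all_vote c' is feasible for
   both problems, so using its cost as the seed yields exactly the minimum. *)
Definition P1 (R : realFieldType) (Np K : nat) (rho : 'I_Np -> 'I_K -> R)
  (c' : 'I_K) : R :=
  \big[Num.min/cost rho (all_vote Np c')]_(V : voteMx Np K | feas1 c' V) cost rho V.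

Definition P2 (R : realFieldType) (Np K : nat) (rho : 'I_Np -> 'I_K -> R)
  (cstar c' : 'I_K) : R :=
  \big[Num.min/cost rho (all_vote Np c')]_(V : voteMx Np K | feas2 cstar c' V) cost rho V.

(* Let z minimise P_2 over the classes other than c*, attained at a vote
   configuration V.  The majority vote d of V beats every other class, in
   particular c*, so V is feasible for both P_1(d) and P_2(d); hence
   P_2(d) <= O(V) = P_2(z) and d is again a minimiser.  Since every feasible
   point of P_1(d) is feasible for P_2(d), P_2(d) <= P_1(d) <= O(V) = P_2(d). *)
From HB Require Import structures.
From mathcomp Require Import all_boot all_order all_algebra.
From mathcomp Require Import zify.
Set Implicit Arguments. Unset Strict Implicit. Unset Printing Implicit Defensive.
Import Order.TTheory GRing.Theory Num.Theory.
Local Open Scope ring_scope.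

Lemma bigmin_seed_or_attained (d : Order.disp_t) (T : orderType d) (I : finType)
    (P : pred I) (F : I -> T) (x : T) :
  \big[Order.min/x]_(i | P i) F i = x \/
  exists2 i, P i & \big[Order.min/x]_(i | P i) F i = F i.
Proof.
elim/big_ind: _ => [|a b Ha Hb|i Pi]; first by left.
  by case: leP.
by right; exists i.
Qed.

Lemma exists_ord_neq (K : nat) (c : 'I_K) : (1 < K)%N -> exists c' : 'I_K, c' != c.
Proof.
move=> K_gt1; have [c0|c_neq0] := eqVneq c (Ordinal (ltnW K_gt1)).
  by exists (Ordinal K_gt1); rewrite c0 -val_eqE.
by exists (Ordinal (ltnW K_gt1)); rewrite eq_sym.
Qed.

Section Majority.

Variables (K : nat) (c0 : 'I_K) (n : 'I_K -> nat).

(* Since K - c < K, the score orders classes by their count first and breaks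
   ties in favour of the smaller index, as majVote does. *)
Definition majority : 'I_K := [arg max_(c > c0) (n c * K + (K - c))%N].

Lemma majority_wins (c : 'I_K) :
  c != majority -> (n c + (c < majority)%N <= n majority)%N.
Proof.
rewrite /majority; case: arg_maxnP => // d _ d_max c_neq_d.
move: (d_max c isT) (ltn_ord c) (ltn_ord d) => score_le c_lt d_lt.
case: ltngtP => [c_d|d_c|/val_inj cd]; last by rewrite cd eqxx in c_neq_d.
- suff : ~ (n d <= n c)%N by lia.
  move=> le_dc; have : (n d * K <= n c * K)%N by rewrite leq_mul2r le_dc orbT.
  lia.
- suff : ~ (n d < n c)%N by lia.
  move=> lt_dc; have : ((n d).+1 * K <= n c * K)%N by rewrite leq_mul2r lt_dc orbT.
  rewrite mulSn; lia.
Qed.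

End Majority.

Section VoteProblems.

Variables (R : realFieldType) (Np K : nat) (rho : 'I_Np -> 'I_K -> R).

Definition tally (V : voteMx Np K) (c : 'I_K) : nat := (\sum_(i < Np) (V i c : nat))%N.

Lemma feas1_majority (c0 : 'I_K) (V : voteMx Np K) :
  is_vote_config V -> feas1 (majority c0 (tally V)) V.
Proof.
move=> V_conf; rewrite /feas1 V_conf; apply/forallP => c; apply/implyP => c_neq.
by have := majority_wins c_neq; rewrite /votes -/(tally V _) -/(tally V c); lia.
Qed.

Lemma feas1_feas2 (cstar z : 'I_K) (V : voteMx Np K) :
  z != cstar -> feas1 z V -> feas2 cstar z V.
Proof.
move=> z_neq /andP[V_conf /forallP win]; rewrite /feas2 V_conf /=.
by have := win cstar; rewrite eq_sym z_neq.
Qed.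

Lemma feas2_majority_neq (c0 cstar z : 'I_K) (V : voteMx Np K) :
  z != cstar -> feas2 cstar z V -> majority c0 (tally V) != cstar.
Proof.
move=> z_neq /andP[_ z_beats]; apply/eqP => maj_cstar.
have := @majority_wins _ c0 (tally V) z; rewrite maj_cstar => /(_ z_neq).
move: z_beats; rewrite /votes -/(tally V z) -/(tally V cstar).
have : (z : nat) <> cstar by move/val_inj=> zc; rewrite zc eqxx in z_neq.
by case: (ltngtP z cstar) => /=; lia.
Qed.

Lemma P2_le_P1 (cstar z : 'I_K) : z != cstar -> P2 rho cstar z <= P1 rho z.
Proof.
move=> z_neq; apply: le_bigmin; first exact: bigmin_le_id.
by move=> V /(feas1_feas2 z_neq) V_feas; apply: bigmin_le_cond.
Qed.

End VoteProblems.

Theorem lemma1p3 (R : realFieldType) (Np K : nat) (hNp : (1 <= Np)%N) (hK : (2 <= K)%N)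
  (rho : 'I_Np -> 'I_K -> R) (cstar : 'I_K) :
  exists zstar : 'I_K,
    [/\ zstar != cstar,
        (forall c' : 'I_K, c' != cstar -> P2 rho cstar zstar <= P2 rho cstar c') &
        P1 rho zstar = P2 rho cstar zstar].
Proof.
have [c0 c0_neq] := exists_ord_neq cstar hK.
case: (@arg_minP _ _ _ c0 (fun c => c != cstar) (P2 rho cstar) c0_neq) => /= z z_neq z_min.
have [P2_seed|[V V_feas P2_V]] := bigmin_seed_or_attained (feas2 cstar z) (cost rho)
  (cost rho (all_vote Np z)).
  (* cost(all_vote z) is also the seed of P1 z, hence an upper bound for it *)
  exists z; split=> //; apply/eqP; rewrite eq_le P2_le_P1 // andbT.
  by rewrite [P2 _ _ _]P2_seed; apply: bigmin_le_id.
set d := majority c0 (tally V).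
have d_neq : d != cstar by apply: feas2_majority_neq z_neq V_feas.
have d_feas1 : feas1 d V by apply: feas1_majority; case/andP: V_feas.
have P2_d : P2 rho cstar d = cost rho V.
  apply/eqP; rewrite eq_le -[cost _ _]P2_V z_min // andbT P2_V.
  by apply: bigmin_le_cond; apply: feas1_feas2.
exists d; split=> //; first by move=> c' /z_min; rewrite P2_d -P2_V.
apply/eqP; rewrite eq_le P2_le_P1 // andbT P2_d.
exact: bigmin_le_cond.
Qed.
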